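(* Let $P$ be a poset and $\mathcal D$ a meet-specification of $P$ with radius $\omega$. Let $X$ be the set of all non-empty finitely generated $\mathcal D$-filters of $P$, ordered by reverse inclusion, and $e_X:P\to X$, $p\mapsto p^\uparrow$, the corresponding meet-extension. If $L$ is a lattice and $f:P\to L$ is a $\mathcal D$-morphism, then $f$ has enough meets for $e_X$, i.e. $\bigwedge f[e_X^{-1}(x^\uparrow)]$ exists in $L$ for every $x\in X$.
   Context: $p^\uparrow=\{q\ge p\}$; $e^{-1}(Z)=\{p:e(p)\in Z\}$. A meet-specification of $P$ is a set $\mathcal D$ of subsets of $P$ such that $\bigwedge S$ exists in $P$ for each $S\in\mathcal D$ and $\{p\}\in\mathcal D$ for all $p\in P$; radius $\omega$ means every member is finite. A $\mathcal D$-filter is an upset $F$ with $\bigwedge S\in F$ whenever $S\in\mathcal D$, $S\subseteq F$; it is finitely generated if it is the smallest $\mathcal D$-filter containing some finite set. An order-preserving map $f$ is a $\mathcal D$-morphism if $f(\bigwedge S)=\bigwedge f[S]$ for all $S\in\mathcal D$. *)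

From mathcomp Require Import all_boot all_order.
Set Implicit Arguments. Unset Strict Implicit. Unset Printing Implicit Defensive.
Import Order.TTheory.
Local Open Scope order_scope.

Definition is_glb {d} {T : porderType d} (A : T -> Prop) (m : T) : Prop :=
  (forall a, A a -> m <= a) /\ (forall l, (forall a, A a -> l <= a) -> l <= m).

Definition has_meet {d} {T : porderType d} (A : T -> Prop) : Prop :=
  exists m, is_glb A m.

Definition finite_set {T : eqType} (A : T -> Prop) : Prop :=
  exists s : seq T, forall x, A x <-> x \in s.

Definition fimage {A B : Type} (f : A -> B) (S : A -> Prop) : B -> Prop :=
  fun b => exists2 a, S a & f a = b.

Definition subset {T : Type} (A B : T -> Prop) : Prop := forall x, A x -> B x.

Definition meet_spec {d} {P : porderType d} (D : (P -> Prop) -> Prop) : Prop :=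
  (forall S, D S -> has_meet S) /\ (forall p, D (fun q => q = p)).

Definition radius_omega {d} {P : porderType d} (D : (P -> Prop) -> Prop) : Prop :=
  forall S, D S -> finite_set S.

Definition upset {d} {P : porderType d} (F : P -> Prop) : Prop :=
  forall p q, F p -> p <= q -> F q.

Definition D_filter {d} {P : porderType d} (D : (P -> Prop) -> Prop)
  (F : P -> Prop) : Prop :=
  upset F /\
  (forall S m, D S -> subset S F -> is_glb S m -> F m).

Definition D_filter_generated_by {d} {P : porderType d}
  (D : (P -> Prop) -> Prop) (A F : P -> Prop) : Prop :=
  D_filter D F /\ subset A F /\
  (forall G, D_filter D G -> subset A G -> subset F G).

Definition finitely_generated {d} {P : porderType d}
  (D : (P -> Prop) -> Prop) (F : P -> Prop) : Prop :=
  exists2 A, finite_set A & D_filter_generated_by D A F.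

Definition D_morphism {d dL} {P : porderType d} {L : porderType dL}
  (D : (P -> Prop) -> Prop) (f : P -> L) : Prop :=
  (forall p q, p <= q -> f p <= f q) /\
  (forall S m, D S -> is_glb S m -> is_glb (fimage f S) (f m)).

Definition in_X {d} {P : porderType d} (D : (P -> Prop) -> Prop)
  (x : P -> Prop) : Prop :=
  (exists p, x p) /\ finitely_generated D x.

(* e_X p = p^up *)
Definition up {d} {P : porderType d} (p : P) : P -> Prop := fun q => p <= q.

Definition le_X {T : Type} (x y : T -> Prop) : Prop := subset y x.

(* e_X^{-1}(x^up) = { p | x <=_X e_X p } *)
Definition eX_preimage_up {d} {P : porderType d} (x : P -> Prop) : P -> Prop :=
  fun p => le_X x (up p).

From Pilot Require Import Defs.
From mathcomp Require Import all_boot all_order.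
Import Order.TTheory.
Local Open Scope order_scope.

(* Let [x] be generated by the finite set [A].  For any lower bound [l] of [f] on
   [A], the set [{p | l <= f p}] is a D-filter, because [f] is monotone and
   preserves the meets of members of D; hence it contains [x].  So the finite meet
   in [L] of [f] over [A] together with one element [p0] of [x] (needed because [A]
   may be empty and [L] need not have a top) is the meet of [f] over all of [x]. *)

Section FiniteMeets.

Context {dL : Order.disp_t} {L : latticeType dL} {T : eqType} (f : T -> L).

Lemma le_foldr_meet (a0 : T) (s : seq T) (l : L) :
  l <= foldr (fun a acc => f a `&` acc) (f a0) s <->
  l <= f a0 /\ forall a, a \in s -> l <= f a.
Proof.
elim: s => [|b s IH] /=.
  by split=> [l_fa0|[]//]; split=> // a; rewrite in_nil.
rewrite lexI; split.
- case/andP=> l_fb /IH[l_fa0 l_fs]; split=> // a.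
  by rewrite in_cons => /predU1P[->|]; last exact: l_fs.
- case=> l_fa0 l_fs; apply/andP; split; first by apply: l_fs; exact: mem_head.
  by apply/IH; split=> // a a_s; apply: l_fs; rewrite in_cons a_s orbT.
Qed.

Lemma is_glb_foldr_meet (a0 : T) (s : seq T) :
  is_glb (fimage f (fun a => a = a0 \/ a \in s))
         (foldr (fun a acc => f a `&` acc) (f a0) s).
Proof.
have [m_fa0 m_fs] := proj1 (le_foldr_meet a0 s _) (lexx _).
split=> [_ [a [->|a_s] <-]|l l_low]; [done | exact: m_fs|].
apply/le_foldr_meet; split=> [|a a_s]; apply: l_low.
  by exists a0; first left.
by exists a; first right.
Qed.

End FiniteMeets.

Section GeneratedFilters.

Context {dP : Order.disp_t} {P : porderType dP} {D : (P -> Prop) -> Prop}.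
Context {dL : Order.disp_t} {L : porderType dL} {f : P -> L}.
Hypothesis f_morph : D_morphism D f.

Lemma D_filter_preimage_ge (l : L) : D_filter D (fun p => l <= f p).
Proof.
have [f_mono f_meet] := f_morph; split.
  by move=> p q l_fp le_pq; exact: le_trans l_fp (f_mono _ _ le_pq).
move=> S m DS S_sub m_glb; apply: (proj2 (f_meet S m DS m_glb)).
by move=> _ [a Sa <-]; exact: S_sub.
Qed.

Lemma generated_filter_lower_bound {A F : P -> Prop} {l : L} :
  D_filter_generated_by D A F -> (forall a, A a -> l <= f a) ->
  forall p, F p -> l <= f p.
Proof. by case=> _ [_ F_min] l_low; apply: F_min; first exact: D_filter_preimage_ge. Qed.

Lemma is_glb_image_between {A F G H : P -> Prop} {m : L} :
  D_filter_generated_by D A F ->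
  Defs.subset A G -> Defs.subset G H -> Defs.subset H F ->
  is_glb (fimage f G) m -> is_glb (fimage f H) m.
Proof.
move=> genF AG GH HF [m_low m_great]; split.
  move=> _ [p Hp <-]; apply: generated_filter_lower_bound genF _ _ (HF _ Hp).
  by move=> a Aa; apply: m_low; exists a; first exact: AG.
by move=> l l_low; apply: m_great => _ [p Gp <-]; apply: l_low; exists p; first exact: GH.
Qed.

End GeneratedFilters.

Lemma eX_preimage_up_of_upset {dP : Order.disp_t} {P : porderType dP}
  (x : P -> Prop) (p : P) :
  upset x -> x p -> eX_preimage_up x p.
Proof. by move=> x_up xp q; exact: x_up. Qed.

Theorem lemma9p4 (dP : Order.disp_t) (P : porderType dP)
  (D : (P -> Prop) -> Prop)
  (dL : Order.disp_t) (L : latticeType dL) (f : P -> L) :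
  meet_spec D -> radius_omega D -> D_morphism D f ->
  forall x : P -> Prop, in_X D x ->
    has_meet (fimage f (eX_preimage_up x)).
Proof.
(* Finite generation already supplies the finite set. *)
move=> _ _ f_morph x [[p0 xp0] [A [s As] genx]].
have [[x_up _] [Ax _]] := genx.
exists (foldr (fun a acc => f a `&` acc) (f p0) s).
apply: (is_glb_image_between f_morph genx _ _ _ (is_glb_foldr_meet f p0 s)).
- by move=> a /As; right.
- move=> p [->|/As/Ax xp]; exact: eX_preimage_up_of_upset.
- by move=> p; apply; exact: lexx.
Qed.
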